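(* Suppose each $f_i$ is continuously differentiable and there exist $\mu>0$, $L>0$ with $-L\le\frac1{M_i}f_i'(w)\le-\mu$ for all $i$ and all $w\in\mathbb R$. Let $\omega_b$ solve the blended dynamics and let $\tilde f(t):=Y^TM^{-1/2}\big(f(\mathbb 1_N\omega_b(t))+\xi(t)\big)$. If $C:=\max_{i}\sup_{t>0}|\dot\xi_i(t)|/M_i$ is finite, then for all $t>0$, $$\Big|\frac{d\tilde f}{dt}\Big|^2\le 2NM_bC^2\Big(1+\frac L\mu\Big)^2+\frac{2NL^2}{M_b}\,|f_b(\omega_b(0))+\xi_b(0_+)|^2e^{-2\mu t}.$$ If $C_{\lim}:=\max_i\limsup_{t\to\infty}|\dot\xi_i(t)|/M_i$ is finite, then $$\limsup_{t\to\infty}\Big|\frac{d\tilde f}{dt}\Big|^2\le 2NM_bC_{\lim}^2\Big(1+\frac L\mu\Big)^2.$$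
   Context: $N\ge2$ nodes with $M_i>0$, $M=\mathrm{diag}(M_1,\dots,M_N)$, $M_b=\frac1N\sum_iM_i$; functions $f_i:\mathbb R\to\mathbb R$ with $f_i(0)=0$, $f(\omega)=(f_1(\omega_1),\dots,f_N(\omega_N))^T$, $f_b(w)=\frac1N\sum_if_i(w)$. Disturbances $\xi=(\xi_1,\dots,\xi_N)^T$ are continuously differentiable on $(0,\infty)$, possibly with a finite jump at $t=0$ ($\xi(0_+)$ the right limit); $\xi_b=\frac1N\sum_i\xi_i$. The blended dynamics is the scalar ODE $M_b\dot\omega_b=f_b(\omega_b)+\xi_b(t)$ with some initial value $\omega_b(0)$. $\mathbb 1_N$ is the all-ones vector, and $Y\in\mathbb R^{N\times(N-1)}$ is a matrix whose columns form an orthonormal basis of the null space of $\mathbb 1_N^TM^{1/2}$. $|\cdot|$ is the Euclidean norm. *)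

From mathcomp Require Import all_boot all_order all_algebra.
From mathcomp Require Import all_classical all_reals all_analysis.
Import Order.TTheory GRing.Theory Num.Theory numFieldTopology.Exports numFieldNormedType.Exports.

Set Implicit Arguments.
Unset Strict Implicit.
Unset Printing Implicit Defensive.

Local Open Scope classical_set_scope.
Local Open Scope ring_scope.

Section Defs.
Variables (R : realType) (N : nat).

Definition Mbar (M : 'I_N -> R) : R := N%:R^-1 * \sum_(i < N) M i.

Definition fbar (f : 'I_N -> R -> R) (w : R) : R := N%:R^-1 * \sum_(i < N) f i w.

Definition xibar (xi : 'I_N -> R -> R) (t : R) : R := N%:R^-1 * \sum_(i < N) xi i t.

(* M^{1/2} as a row vector 1_N^T M^{1/2} *)
Definition onesT_Msqrt (M : 'I_N -> R) : 'rV[R]_N := \row_i Num.sqrt (M i).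

Definition Minvsqrt (M : 'I_N -> R) : 'M[R]_N := diag_mx (\row_i (Num.sqrt (M i))^-1).

Definition orthonormal_null_basis (M : 'I_N -> R) (Y : 'M[R]_(N, N.-1)) : Prop :=
  [/\ Y^T *m Y = 1%:M,
      onesT_Msqrt M *m Y = 0
    & forall v : 'cV[R]_N, onesT_Msqrt M *m v = 0 -> exists c : 'cV[R]_(N.-1), v = Y *m c].

Definition blended_solution (M : 'I_N -> R) (f xi : 'I_N -> R -> R) (omb : R -> R) : Prop :=
  omb t @[t --> 0^'+] --> omb 0 /\
  forall t : R, 0 < t ->
    derivable omb t 1 /\ Mbar M * derive1 omb t = fbar f (omb t) + xibar xi t.

Definition tilde_f (M : 'I_N -> R) (Y : 'M[R]_(N, N.-1)) (f xi : 'I_N -> R -> R)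
  (omb : R -> R) (t : R) : 'cV[R]_(N.-1) :=
  Y^T *m Minvsqrt M *m (\col_i (f i (omb t) + xi i t)).

Definition eucl_sq (n : nat) (v : 'cV[R]_n) : R := \sum_(k < n) (v k 0) ^+ 2.

Definition xi_rate_set (M : 'I_N -> R) (xi : 'I_N -> R -> R) (i : 'I_N) : set R :=
  [set `|derive1 (xi i) t| / M i | t in [set t : R | 0 < t]].

Definition Cxi (M : 'I_N -> R) (xi : 'I_N -> R -> R) : R :=
  \big[Num.max/0]_(i < N) sup (xi_rate_set M xi i).

Definition limsup_pinfty (g : R -> R) : \bar R :=
  limf_esup (fun t : R => (g t)%:E) (pinfty_nbhs R).

Definition Clim_xi (M : 'I_N -> R) (xi : 'I_N -> R -> R) : \bar R :=
  \big[Order.max/-oo%E]_(i < N) limsup_pinfty (fun t => `|derive1 (xi i) t| / M i).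

End Defs.

(* The mean forcing z := f_b(omb) + xi_b = M_b omb' satisfies z' = k z + xi_b' with
   k = f_b'(omb) / M_b <= - mu and |xi_b'| <= M_b C, so comparison with the solution of
   g' = - mu g + M_b C gives |z t| <= |z T0| e^(- mu (t - T0)) + M_b C / mu.  The i-th entry
   of M^(-1/2) (f(1 omb) + xi)' is sqrt M_i (f_i'(omb) omb' + xi_i') / M_i, of modulus at most
   sqrt M_i (L |omb'| + C), and Y^T is a contraction, so |tilde f'|^2 <= N M_b (L |omb'| + C)^2;
   substituting |omb'| = |z| / M_b and (a + b)^2 <= 2 a^2 + 2 b^2 gives the bound for t > 0.
   For the limsup, start the same estimate at a time after which every rate is below
   C_lim + d, let t -> oo and then d -> 0. *)

From mathcomp Require Import all_boot all_order all_algebra.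
From mathcomp Require Import all_classical all_reals all_analysis.
From mathcomp Require Import ring lra.
Import Order.TTheory GRing.Theory Num.Theory numFieldTopology.Exports numFieldNormedType.Exports.
Local Open Scope classical_set_scope.
Local Open Scope ring_scope.

Section euclidean.
Context {R : realType}.

Lemma eucl_sq_ge0 n (v : 'cV[R]_n) : 0 <= eucl_sq v.
Proof. by apply: sumr_ge0 => k _; exact: sqr_ge0. Qed.

Lemma eucl_sqE n (v : 'cV[R]_n) : eucl_sq v = (v^T *m v) 0 0.
Proof. by rewrite mxE; apply: eq_bigr => k _; rewrite !mxE expr2. Qed.

Lemma eucl_sq_diag_mx n (d : 'rV[R]_n) (v : 'cV[R]_n) :
  eucl_sq (diag_mx d *m v) = \sum_(i < n) (d 0 i * v i 0) ^+ 2.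
Proof. by apply: eq_bigr => i _; rewrite mul_diag_mx mxE. Qed.

(* Pythagoras for the splitting w = Y (Y^T w) + (w - Y (Y^T w)) into orthogonal parts. *)
Lemma eucl_sq_trmx_mul_le n m (Y : 'M[R]_(n, m)) (w : 'cV[R]_n) :
  Y^T *m Y = 1%:M -> eucl_sq (Y^T *m w) <= eucl_sq w.
Proof.
move=> YY; set u := Y^T *m w; set q := w - Y *m u.
have Yq : Y^T *m q = 0 by rewrite mulmxBr mulmxA YY mul1mx subrr.
have qY : q^T *m Y = 0 by rewrite -[Y]trmxK -trmx_mul Yq trmx0.
have wE : w = Y *m u + q by rewrite addrC subrK.
clearbody u q; subst w.
have -> : eucl_sq (Y *m u + q) = eucl_sq u + eucl_sq q.
  rewrite !eucl_sqE [(_ + q)^T]raddfD /= trmx_mul mulmxDl !mulmxDr -!mulmxA Yq mulmx0.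
  by rewrite (mulmxA Y^T) YY mul1mx mulmxA qY mul0mx addr0 add0r !mxE.
by rewrite lerDl eucl_sq_ge0.
Qed.

End euclidean.

Section calculus.
Context {R : realType}.
Implicit Types (h z : R -> R) (t x : R).

Lemma derivable1_continuous h x : derivable h x 1 -> {for x, continuous h}.
Proof. by move=> /derivable1_diffP /differentiable_continuous. Qed.

Lemma is_derive_sum_mul n (a : 'I_n -> R) (h : 'I_n -> R -> R) (dh : 'I_n -> R) x :
  (forall i, is_derive x 1 (h i) (dh i)) ->
  is_derive x 1 (fun s => \sum_(i < n) a i * h i s) (\sum_(i < n) a i * dh i).
Proof.
move=> hd; have -> : (fun s => \sum_(i < n) a i * h i s) = \sum_(i < n) (a i *: h i).
  by apply/funext => s; rewrite fct_sumE.
exact: is_derive_sum.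
Qed.

Lemma is_derive_mulmx_col m n (A : 'M[R]_(m, n)) (g : 'I_n -> R -> R) (dg : 'I_n -> R) t :
  (forall i, is_derive t 1 (g i) (dg i)) ->
  is_derive t 1 (fun s => A *m \col_i g i s) (A *m \col_i dg i).
Proof.
move=> gd.
have entryE (c : 'I_n -> R) k j : (A *m \col_i c i) k j = \sum_i A k i * c i.
  by rewrite mxE; apply: eq_bigr => i _; rewrite mxE.
have entry k j : is_derive t 1 (fun s => (A *m \col_i g i s) k j) (\sum_i A k i * dg i).
  under eq_fun do rewrite entryE.
  exact: is_derive_sum_mul.
have Ad : derivable (fun s => A *m \col_i g i s) t 1.
  by apply/derivable_mxP => k j; have [] := entry k j.
apply: DeriveDef => //; rewrite derive_mx //.
by apply/matrixP => k j; rewrite [RHS]entryE mxE derive_val.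
Qed.

Lemma is_derive_decay (c a t0 K t : R) :
  is_derive t 1 (fun s => c * expR (a * (s - t0)) + K) (a * (c * expR (a * (t - t0)))).
Proof.
have affine : is_derive t 1 (fun s => a * (s - t0)) a.
  have -> : (fun s => a * (s - t0)) = a \*: (id - cst t0) by [].
  by apply: is_derive_eq; rewrite subr0 /GRing.scale /= mulr1.
have -> : (fun s => c * expR (a * (s - t0)) + K) =
    c \*: (expR \o (fun s => a * (s - t0))) + cst K by [].
by apply: is_derive_eq; rewrite addr0 /GRing.scale /=; ring.
Qed.

(* A maximum point c of h on [a, b] would satisfy h c > 0, and then the mean value theorem
   on a short interval to the left of c, where h > 0 and thus h' < 0, forces h c to drop. *)
Lemma le_max0_of_derive_neg h a b : a <= b ->
  (forall x, a <= x <= b -> derivable h x 1) ->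
  (forall x, a < x < b -> 0 < h x -> derive1 h x < 0) ->
  h b <= Num.max (h a) 0.
Proof.
move=> ab hd hneg; rewrite leNgt gt_max; apply/negP => /andP[hab hb0].
have hcont x : a <= x <= b -> {for x, continuous h}.
  by move=> /hd /derivable1_continuous.
have [c cab hmax] : exists2 c, c \in `[a, b] & forall x, x \in `[a, b] -> h x <= h c.
  apply: EVT_max => //; apply: continuous_in_subspaceT => x.
  by rewrite inE /= in_itv /= => /hcont.
move: (cab); rewrite in_itv /= => /[dup] cab' /andP[ac cb].
have hbc : h b <= h c by apply: hmax; rewrite in_itv /= ab lexx.
have {}ac : a < c.
  by rewrite lt_neqAle ac andbT; apply/eqP => ca; move: hab; rewrite ca ltNge hbc.
have [e e0 hpos] : exists2 e, 0 < e & forall x, `|c - x| < e -> 0 < h x.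
  have hc0 : 0 < h c by exact: lt_le_trans hb0 hbc.
  have : \forall x \near c, 0 < h x by exact: cvgr_gt (hcont c cab') 0 hc0.
  move=> /nbhs_normP[e /= e0 he].
  by exists e.
pose a' := Num.max a (c - e / 2).
have a'c : a' < c by rewrite gt_max ac /=; lra.
have aa' : a <= a' by rewrite le_max lexx.
have [d] : exists2 d, d \in `]a', c[ & h c - h a' = derive1 h d * (c - a').
  apply: MVT => // [x|].
    rewrite in_itv /= => /andP[a'x xc]; rewrite derive1E; apply: derivableP.
    by apply: hd; apply/andP; split; lra.
  apply: continuous_in_subspaceT => x; rewrite inE /= in_itv /= => /andP[a'x xc].
  by apply: hcont; apply/andP; split; lra.
rewrite in_itv /= => /andP[a'd dc] hdiff.
have hd0 : 0 < h d.
  have : c - e / 2 <= a' by rewrite le_max lexx orbT.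
  by move=> ?; apply: hpos; rewrite ger0_norm; lra.
have : derive1 h d * (c - a') < 0 by rewrite pmulr_llt0 ?subr_gt0 // hneg //; lra.
have : h a' <= h c by apply: hmax; rewrite in_itv /=; apply/andP; split; lra.
lra.
Qed.

(* Comparison with the solution G of G' = - mu G + B, G(t0) = |z0| + B / mu:
   wherever z exceeds G, the difference z - G is decreasing. *)
Lemma le_decay_of_derive_le z (t0 mu B z0 : R) : 0 < mu -> 0 <= B ->
  (forall t, t0 < t -> derivable z t 1) ->
  z t @[t --> t0^'+] --> z0 ->
  (forall t, t0 < t -> 0 < z t -> derive1 z t <= - mu * z t + B) ->
  forall t, t0 < t -> z t <= `|z0| * expR (- mu * (t - t0)) + B / mu.
Proof.
move=> mu0 B0 zd zlim zineq t1 t01.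
pose E t := `|z0| * expR (- mu * (t - t0)).
have E0 t : 0 <= E t by rewrite mulr_ge0 ?expR_ge0.
have Bmu : 0 <= B / mu by rewrite divr_ge0 // ltW.
pose h t := z t - (E t + B / mu).
have hd t : t0 < t -> is_derive t 1 h (derive1 z t - - mu * E t).
  move=> t0t; apply: is_deriveB; last exact: is_derive_decay.
  by rewrite derive1E; apply: derivableP; exact: zd.
have hlim : h t @[t --> t0^'+] --> z0 - (E t0 + B / mu).
  apply: cvgB => //; apply: cvg_at_right_filter.
  by have [/derivable1_continuous] := is_derive_decay `|z0| (- mu) t0 (B / mu) t0.
rewrite leNgt; apply/negP => zt1; have h1 : 0 < h t1 by rewrite subr_gt0.
have [t' [t't1 t0t' ht']] : exists t', [/\ t' < t1, t0 < t' & h t' < h t1].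
  have : \forall t \near t0^'+, [/\ t < t1, t0 < t & h t < h t1].
    near=> t; split; first by near: t; exact: nbhs_right_lt.
      by near: t; exact: nbhs_right_gt.
    near: t; apply: (cvgr_lt (z0 - (E t0 + B / mu))) => //.
    rewrite /E subrr mulr0 expR0 mulr1; have := ler_norm z0; lra.
  by move=> /filter_ex[t' ?]; exists t'.
suff : h t1 <= Num.max (h t') 0 by rewrite leNgt gt_max ht' h1.
apply: le_max0_of_derive_neg (ltW t't1) _ _ => [x /andP[t'x _]|x /andP[t'x _] hx].
  by have [] := hd x (lt_le_trans t0t' t'x).
have t0x := lt_trans t0t' t'x.
have zx : 0 < z x by move: hx; rewrite /h; have := E0 x; lra.
rewrite derive1E; have [_ ->] := hd x t0x.
have muB : mu * (B / mu) = B by rewrite mulrCA divff ?mulr1 ?gt_eqF.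
have := mulr_gt0 mu0 hx; rewrite /h mulrBr mulrDr muB.
have := zineq x t0x zx; lra.
Unshelve. all: by end_near.
Qed.

Lemma norm_le_decay_of_derive z (t0 mu B z0 : R) : 0 < mu -> 0 <= B ->
  (forall t, t0 < t -> derivable z t 1) ->
  z t @[t --> t0^'+] --> z0 ->
  (forall t, t0 < t -> exists2 k, k <= - mu & `|derive1 z t - k * z t| <= B) ->
  forall t, t0 < t -> `|z t| <= `|z0| * expR (- mu * (t - t0)) + B / mu.
Proof.
move=> mu0 B0 zd zlim zlin t t0t; rewrite ler_norml; apply/andP; split.
  rewrite lerNl -normrN.
  apply: (@le_decay_of_derive_le (fun s => - z s)) => // [s /zd/derivableN //||s t0s zs].
    exact: cvgN.
  have [k kmu /ler_normlP[zk _]] := zlin s t0s.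
  have : - mu * z s <= k * z s by rewrite ler_nM2r // -oppr_gt0.
  have -> : derive1 (fun s => - z s) s = - derive1 z s := derive1N (zd s t0s).
  lra.
apply: le_decay_of_derive_le => // s t0s zs.
have [k kmu /ler_normlP[_ zk]] := zlin s t0s.
have : k * z s <= - mu * z s by rewrite ler_pM2r.
lra.
Qed.

End calculus.

Section limsup.
Context {R : realType}.
Implicit Types g h : R -> R.

Lemma limsup_pinfty_le_of_near g (a : R) :
  (\forall t \near +oo, g t <= a) -> (limsup_pinfty g <= a%:E)%E.
Proof.
move=> ga; apply: (@le_trans _ _ (ereal_sup ((fun t => (g t)%:E) @` [set t | g t <= a]))).
  by apply: ereal_inf_lbound; exists [set t | g t <= a].
by apply: ge_ereal_sup => _ [t /= gta <-]; rewrite lee_fin.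
Qed.

Lemma near_le_of_limsup_pinfty_lt g (a : R) :
  (limsup_pinfty g < a%:E)%E -> \forall t \near +oo, g t <= a.
Proof.
rewrite /limsup_pinfty limf_esupE => /ereal_inf_lt[_ [V pV <-]] Va.
apply: filterS pV => t Vt; rewrite -lee_fin; apply: le_trans (ltW Va).
by apply: ereal_sup_ubound; exists t.
Qed.

Lemma limsup_pinfty_le_cvg g h (l : R) :
  (\forall t \near +oo, g t <= h t) -> h t @[t --> +oo] --> l ->
  (limsup_pinfty g <= l%:E)%E.
Proof.
move=> gh hl; apply/lee_addgt0Pr => e e0; rewrite -EFinD.
apply: limsup_pinfty_le_of_near; near=> t; apply: le_trans (_ : h t <= l + e).
  by near: t.
by apply: ltW; near: t; apply: cvgr_lt hl _ _; rewrite ltrDl.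
Unshelve. all: by end_near.
Qed.

Lemma lee_of_cvg_at_right0 (x : \bar R) (phi : R -> R) (l : R) :
  (forall d, 0 < d -> (x <= (phi d)%:E)%E) -> phi d @[d --> 0^'+] --> l -> (x <= l%:E)%E.
Proof.
move=> xphi phil; apply/lee_addgt0Pr => e e0; rewrite -EFinD.
have : \forall d \near 0^'+, 0 < d /\ phi d < l + e.
  near=> d; split; first by near: d; exact: nbhs_right_gt.
  by near: d; apply: cvgr_lt phil _ _; rewrite ltrDl.
move=> /filter_ex[d [d0 phid]].
by apply: le_trans (xphi d d0) _; rewrite lee_fin ltW.
Unshelve. all: by end_near.
Qed.

Lemma cvg_expR_decay (mu T : R) : 0 < mu -> expR (- mu * (t - T)) @[t --> +oo] --> 0.
Proof.
move=> mu0; apply/cvgrPdist_le => e e0.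
have [A [_ expA]] := (cvgrPdist_le _ _).1 (@cvgr_expR R) e e0.
near=> t; rewrite mulNr; apply: expA.
rewrite -ltr_pdivrMl // ltrBrDr; near: t; apply: nbhs_pinfty_gt; exact: num_real.
Unshelve. all: by end_near.
Qed.

End limsup.

Section blended.
Context {R : realType} {N : nat} {M : 'I_N -> R} {f xi : 'I_N -> R -> R}.
Context {omb : R -> R} {Y : 'M[R]_(N, N.-1)} {mu L : R}.
Hypotheses (N_gt0 : (0 < N)%N) (M_gt0 : forall i, 0 < M i).
Hypothesis f_derivable : forall i w, derivable (f i) w 1.
Hypotheses (mu_gt0 : 0 < mu) (L_gt0 : 0 < L).
Hypothesis f_slope : forall i w, - L <= derive1 (f i) w / M i <= - mu.
Hypothesis xi_derivable : forall i t, 0 < t -> derivable (xi i) t 1.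
Hypothesis Y_orthonormal : Y^T *m Y = 1%:M.
Hypothesis omb_ode : forall t, 0 < t ->
  derivable omb t 1 /\ Mbar M * derive1 omb t = fbar f (omb t) + xibar xi t.

Definition forcing (i : 'I_N) (t : R) : R := f i (omb t) + xi i t.
Definition mean_forcing (t : R) : R := fbar f (omb t) + xibar xi t.
Definition dforcing (i : 'I_N) (t : R) : R :=
  derive1 (f i) (omb t) * derive1 omb t + derive1 (xi i) t.

Lemma sum_Mbar : \sum_(i < N) M i = N%:R * Mbar M.
Proof. by rewrite mulrA mulfV ?mul1r // pnatr_eq0 -lt0n. Qed.

Lemma Mbar_gt0 : 0 < Mbar M.
Proof.
rewrite mulr_gt0 ?invr_gt0 ?ltr0n // (bigD1 (Ordinal N_gt0)) //=.
by rewrite ltr_wpDr // sumr_ge0 // => i _; exact: ltW.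
Qed.

Lemma mean_forcingE : mean_forcing = fun t => \sum_(i < N) N%:R^-1 * forcing i t.
Proof. by apply/funext => t; rewrite /mean_forcing /fbar /xibar -mulrDr -big_split mulr_sumr. Qed.

Lemma is_derive_forcing (i : 'I_N) (t : R) : 0 < t -> is_derive t 1 (forcing i) (dforcing i t).
Proof.
move=> t0; rewrite /forcing /dforcing !derive1E.
have -> : (fun s => f i (omb s) + xi i s) = (f i \o omb + xi i)%R by [].
apply: is_deriveD; last exact/derivableP/xi_derivable.
apply: is_derive1_comp; last by apply: derivableP; case: (omb_ode _ t0).
exact/derivableP/f_derivable.
Qed.

Lemma is_derive_mean_forcing (t : R) : 0 < t ->
  is_derive t 1 mean_forcing (\sum_(i < N) N%:R^-1 * dforcing i t).
Proof.
move=> t0; rewrite mean_forcingE; apply: is_derive_sum_mul => i.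
exact: is_derive_forcing.
Qed.

Lemma is_derive_tilde_f (t : R) : 0 < t ->
  is_derive t 1 (tilde_f M Y f xi omb) (Y^T *m Minvsqrt M *m \col_i dforcing i t).
Proof. by move=> t0; apply: is_derive_mulmx_col => i; exact: is_derive_forcing. Qed.

Lemma mean_forcing_ode (t : R) : 0 < t -> mean_forcing t = Mbar M * derive1 omb t.
Proof. by move=> /omb_ode[]. Qed.

Section rate_bound.
Context {T0 C : R}.
Hypothesis T0_ge0 : 0 <= T0.
Hypothesis rate_le : forall t i, T0 < t -> `|derive1 (xi i) t| / M i <= C.

Lemma rate_bound_ge0 : 0 <= C.
Proof.
have /(rate_le _ (Ordinal N_gt0)) : T0 < T0 + 1 by rewrite ltrDl.
by apply: le_trans; rewrite divr_ge0 // ltW.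
Qed.

Lemma norm_dforcing_le i t : T0 < t ->
  `|dforcing i t / M i| <= L * `|derive1 omb t| + C.
Proof.
move=> T0t; have Mi0 := M_gt0 i.
have -> : dforcing i t / M i =
    derive1 (f i) (omb t) / M i * derive1 omb t + derive1 (xi i) t / M i.
  by rewrite /dforcing mulrDl mulrAC.
apply: le_trans (ler_normD _ _) _; apply: lerD; last first.
  by rewrite normrM [`|_^-1|]gtr0_norm ?invr_gt0 //; exact: rate_le.
have /andP[fL fmu] := f_slope i (omb t).
have fneg : derive1 (f i) (omb t) / M i <= 0.
  by apply: le_trans fmu _; rewrite oppr_le0 ltW.
rewrite normrM; apply: ler_wpM2r; first exact: normr_ge0.
by rewrite (ler0_norm fneg) lerNl.
Qed.

(* The witness k = f_b'(omb) / M_b is the M_i-weighted mean of the f_i'(omb) / M_i. *)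
Lemma mean_forcing_dissipative s : T0 < s ->
  exists2 k, k <= - mu & `|derive1 mean_forcing s - k * mean_forcing s| <= Mbar M * C.
Proof.
move=> T0s; have s0 : 0 < s := le_lt_trans T0_ge0 T0s.
have Mb0 := Mbar_gt0; have N0 : (0 : R) < N%:R by rewrite ltr0n.
have NMb0 : 0 < N%:R * Mbar M by exact: mulr_gt0.
set F' := \sum_(i < N) derive1 (f i) (omb s).
set X := \sum_(i < N) derive1 (xi i) s.
exists (F' / (N%:R * Mbar M)).
  rewrite ler_pdivrMr //.
  have : F' <= \sum_(i < N) - mu * M i.
    apply: ler_sum => i _; have /andP[_] := f_slope i (omb s).
    by rewrite ler_pdivrMr.
  by move/le_trans; apply; rewrite -mulr_sumr sum_Mbar.
have -> : derive1 mean_forcing s = N%:R^-1 * (F' * derive1 omb s + X).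
  rewrite derive1E; have [_ ->] := is_derive_mean_forcing s s0; rewrite -mulr_sumr.
  by rewrite /F' /X mulr_suml -big_split.
rewrite mean_forcing_ode //.
have -> : N%:R^-1 * (F' * derive1 omb s + X) - F' / (N%:R * Mbar M) * (Mbar M * derive1 omb s)
    = N%:R^-1 * X by field; rewrite !lt0r_neq0.
rewrite normrM gtr0_norm ?invr_gt0 // mulrC ler_pdivrMr //.
have -> : Mbar M * C * N%:R = \sum_(i < N) M i * C by rewrite -mulr_suml sum_Mbar; ring.
apply: le_trans (ler_norm_sum _ _ _) _; apply: ler_sum => i _.
by rewrite -ler_pdivrMl // mulrC; exact: rate_le.
Qed.

Lemma norm_mean_forcing_le z0 : mean_forcing t @[t --> T0^'+] --> z0 ->
  forall t, T0 < t ->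
  `|mean_forcing t| <= `|z0| * expR (- mu * (t - T0)) + Mbar M * C / mu.
Proof.
move=> zlim; apply: norm_le_decay_of_derive => //.
- by rewrite mulr_ge0 ?rate_bound_ge0 // ltW // Mbar_gt0.
- by move=> s T0s; have [] := is_derive_mean_forcing s (le_lt_trans T0_ge0 T0s).
- exact: mean_forcing_dissipative.
Qed.

Lemma eucl_sq_derive_tilde_f_le_derive_omb t : T0 < t ->
  eucl_sq (derive1 (tilde_f M Y f xi omb) t)
    <= N%:R * Mbar M * (L * `|derive1 omb t| + C) ^+ 2.
Proof.
move=> T0t; have t0 : 0 < t := le_lt_trans T0_ge0 T0t.
rewrite derive1E; have [_ ->] := is_derive_tilde_f t t0; rewrite -mulmxA.
apply: le_trans (eucl_sq_trmx_mul_le _ _ _ _ Y_orthonormal) _.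
rewrite eucl_sq_diag_mx -sum_Mbar mulr_suml; apply: ler_sum => i _.
have Mi0 := M_gt0 i; rewrite !mxE.
have -> : ((Num.sqrt (M i))^-1 * dforcing i t) ^+ 2 = M i * (dforcing i t / M i) ^+ 2.
  by rewrite exprMn exprVn sqr_sqrtr ?ltW // expr_div_n; field; exact: lt0r_neq0.
rewrite ler_pM2l // -(real_normK (num_real (dforcing i t / M i))) !expr2.
by apply: ler_pM; rewrite ?normr_ge0 //; exact: norm_dforcing_le.
Qed.

Lemma eucl_sq_derive_tilde_f_decay z0 : mean_forcing t @[t --> T0^'+] --> z0 ->
  forall t, T0 < t ->
  eucl_sq (derive1 (tilde_f M Y f xi omb) t)
    <= N%:R * Mbar M * (C * (1 + L / mu) + L / Mbar M * (`|z0| * expR (- mu * (t - T0)))) ^+ 2.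
Proof.
move=> zlim t T0t; have t0 : 0 < t := le_lt_trans T0_ge0 T0t.
have Mb0 := Mbar_gt0; have C0 := rate_bound_ge0.
set E := `|z0| * expR (- mu * (t - T0)).
have Ldomb : L * `|derive1 omb t| <= C * (L / mu) + L / Mbar M * E.
  have -> : `|derive1 omb t| = `|mean_forcing t| / Mbar M.
    by rewrite mean_forcing_ode // normrM (gtr0_norm Mb0) [RHS]mulrC mulKf ?gt_eqF.
  have -> : C * (L / mu) + L / Mbar M * E = L / Mbar M * (E + Mbar M * C / mu).
    by field; rewrite !gt_eqF.
  rewrite mulrCA mulrC ler_pM2l ?divr_gt0 //.
  exact: norm_mean_forcing_le zlim _ T0t.
apply: le_trans (eucl_sq_derive_tilde_f_le_derive_omb _ T0t) _.
apply: ler_wpM2l; first by rewrite mulr_ge0 ?ler0n ?ltW.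
have W0 : 0 <= L * `|derive1 omb t| + C := addr_ge0 (mulr_ge0 (ltW L_gt0) (normr_ge0 _)) C0.
rewrite !expr2; apply: ler_pM => //; lra.
Qed.

End rate_bound.

Lemma rate_le_Cxi : (forall i, has_ubound (xi_rate_set M xi i)) ->
  forall t i, 0 < t -> `|derive1 (xi i) t| / M i <= Cxi M xi.
Proof.
move=> ub t i t0; apply: le_trans (le_bigmax _ _ i); apply: sup_upper_bound; last by exists t.
by split; [exists (`|derive1 (xi i) t| / M i); exists t | exact: ub].
Qed.

Lemma eucl_sq_derive_tilde_f_le_Cxi (xi0 : 'I_N -> R) :
  omb t @[t --> 0^'+] --> omb 0 ->
  (forall i, xi i t @[t --> 0^'+] --> xi0 i) ->
  (forall i, has_ubound (xi_rate_set M xi i)) ->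
  forall t, 0 < t ->
  eucl_sq (derive1 (tilde_f M Y f xi omb) t)
    <= 2 * N%:R * Mbar M * Cxi M xi ^+ 2 * (1 + L / mu) ^+ 2
       + 2 * N%:R * L ^+ 2 / Mbar M
         * `|fbar f (omb 0) + N%:R^-1 * \sum_(i < N) xi0 i| ^+ 2 * expR (- (2 * mu * t)).
Proof.
move=> omb0 xi0lim ub t t0.
set z0 := fbar f (omb 0) + _.
have cvg_sum (F : 'I_N -> R -> R) (l : 'I_N -> R) : (forall i, F i s @[s --> 0^'+] --> l i) ->
    \sum_(i < N) F i s @[s --> 0^'+] --> \sum_(i < N) l i.
  by move=> Fl; apply: cvg_big => //; exact: add_continuous.
have zlim : mean_forcing s @[s --> 0^'+] --> z0.
  apply: cvgD; apply: cvgM; try exact: cvg_cst; apply: cvg_sum => // i.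
  by apply: continuous_cvg => //; exact: derivable1_continuous.
apply: le_trans (eucl_sq_derive_tilde_f_decay (lexx 0) (rate_le_Cxi ub) _ zlim _ t0) _.
have Mb0 := Mbar_gt0; rewrite subr0.
set a := Cxi M xi * (1 + L / mu); set b := L / Mbar M * (`|z0| * expR (- mu * t)).
have -> : expR (- (2 * mu * t)) = expR (- mu * t) ^+ 2 by rewrite -expRM_natr; congr expR; ring.
have -> : 2 * N%:R * Mbar M * Cxi M xi ^+ 2 * (1 + L / mu) ^+ 2
    + 2 * N%:R * L ^+ 2 / Mbar M * `|z0| ^+ 2 * expR (- mu * t) ^+ 2
    = N%:R * Mbar M * (2 * a ^+ 2 + 2 * b ^+ 2).
  by rewrite /a /b; field; rewrite ?(gt_eqF Mb0) ?(gt_eqF mu_gt0).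
apply: ler_wpM2l; first by rewrite mulr_ge0 ?ler0n ?ltW.
by rewrite -subr_ge0 (_ : _ - _ = (a - b) ^+ 2) ?sqr_ge0 //; ring.
Qed.

Lemma limsup_eucl_sq_derive_tilde_f_le_rate (C : R) :
  (\forall t \near +oo, forall i, `|derive1 (xi i) t| / M i <= C) ->
  (limsup_pinfty (fun t => eucl_sq (derive1 (tilde_f M Y f xi omb) t))
    <= (N%:R * Mbar M * (C * (1 + L / mu)) ^+ 2)%:E)%E.
Proof.
move=> [T [_ rateT]]; pose T1 := Num.max T 1.
have T1_gt0 : 0 < T1 by rewrite lt_max ltr01 orbT.
have rate_le t i : T1 < t -> `|derive1 (xi i) t| / M i <= C.
  by rewrite gt_max => /andP[Tt _]; exact: rateT.
have zlim : mean_forcing t @[t --> T1^'+] --> mean_forcing T1.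
  apply: cvg_at_right_filter.
  by have [/derivable1_continuous] := is_derive_mean_forcing T1 T1_gt0.
pose K := C * (1 + L / mu); pose V := L / Mbar M * `|mean_forcing T1|.
apply: (@limsup_pinfty_le_cvg _ _
  (fun t => N%:R * Mbar M * ((K + V * expR (- mu * (t - T1))) * (K + V * expR (- mu * (t - T1)))))).
  near=> t; rewrite -expr2 /K /V -[L / _ * _ * _]mulrA.
  apply: (eucl_sq_derive_tilde_f_decay (ltW T1_gt0) rate_le _ zlim).
  by near: t; apply: nbhs_pinfty_gt; exact: num_real.
have KV : K + V * expR (- mu * (t - T1)) @[t --> +oo] --> K + V * 0.
  by apply: cvgD; [exact: cvg_cst | apply: cvgMl_tmp; exact: cvg_expR_decay].
rewrite mulr0 addr0 in KV.
by rewrite expr2; apply: cvgMl_tmp; exact: cvgM.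
Unshelve. all: by end_near.
Qed.

Lemma limsup_eucl_sq_derive_tilde_f_le_Clim : Clim_xi M xi \is a fin_num ->
  (limsup_pinfty (fun t => eucl_sq (derive1 (tilde_f M Y f xi omb) t))
    <= (2 * N%:R * Mbar M * fine (Clim_xi M xi) ^+ 2 * (1 + L / mu) ^+ 2)%:E)%E.
Proof.
move=> Cfin; set c := fine _; have Mb0 := Mbar_gt0.
have rate_limsup i : (limsup_pinfty (fun t => (`|derive1 (xi i) t| / M i)%R) <= c%:E)%E.
  by rewrite /c fineK //; exact: le_bigmax.
have c0 : 0 <= c.
  rewrite -lee_fin; apply: le_trans (rate_limsup (Ordinal N_gt0)).
  apply: limf_esup_ge0 => [[T [_ /(_ (T + 1))]]|t]; first by rewrite ltrDl ltr01 => /(_ isT).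
  by rewrite lee_fin divr_ge0 // ltW.
apply: (@le_trans _ _ (N%:R * Mbar M * (c * (1 + L / mu)) ^+ 2)%:E).
  apply: (@lee_of_cvg_at_right0 _ _ (fun d => N%:R * Mbar M * ((c + d) * (1 + L / mu)) ^+ 2)).
    move=> d d0; apply: limsup_eucl_sq_derive_tilde_f_le_rate; apply: filter_forall => i.
    apply: near_le_of_limsup_pinfty_lt; apply: le_lt_trans (rate_limsup i) _.
    by rewrite lte_fin ltrDl.
  apply: cvg_at_right_filter; rewrite -[c in X in _ --> X]addr0 expr2.
  under eq_fun do rewrite expr2.
  by apply: cvgMl_tmp; apply: cvgM; apply: cvgMr_tmp; apply: cvgD (cvg_cst _) cvg_id.
rewrite lee_fin exprMn.
have := mulr_ge0 (mulr_ge0 (ler0n R N) (ltW Mb0)) (mulr_ge0 (sqr_ge0 c) (sqr_ge0 (1 + L / mu))).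
lra.
Qed.

End blended.

Theorem lemmaA1 (R : realType) (N : nat) (M : 'I_N -> R) (f xi : 'I_N -> R -> R)
  (xi0 : 'I_N -> R) (omb : R -> R) (Y : 'M[R]_(N, N.-1)) (mu L : R) :
  (2 <= N)%N ->
  (forall i, 0 < M i) ->
  (forall i, f i 0 = 0) ->
  (forall i w, derivable (f i) w 1) ->
  (forall i, continuous (derive1 (f i))) ->
  0 < mu -> 0 < L ->
  (forall i w, - L <= derive1 (f i) w / M i <= - mu) ->
  (forall i t, 0 < t -> derivable (xi i) t 1) ->
  (forall i t, 0 < t -> {for t, continuous (derive1 (xi i))}) ->
  (forall i, xi i t @[t --> 0^'+] --> xi0 i) ->
  orthonormal_null_basis M Y ->
  blended_solution M f xi omb ->
  let tf := tilde_f M Y f xi omb in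
  (forall t, 0 < t -> derivable tf t 1) /\
  ((forall i, has_ubound (xi_rate_set M xi i)) ->
   forall t, 0 < t ->
     eucl_sq (derive1 tf t)
       <= 2 * N%:R * Mbar M * Cxi M xi ^+ 2 * (1 + L / mu) ^+ 2
          + 2 * N%:R * L ^+ 2 / Mbar M
            * `|fbar f (omb 0) + N%:R^-1 * \sum_(i < N) xi0 i| ^+ 2
            * expR (- (2 * mu * t))) /\
  (Clim_xi M xi \is a fin_num ->
   (limsup_pinfty (fun t => eucl_sq (derive1 tf t))
     <= (2 * N%:R * Mbar M * fine (Clim_xi M xi) ^+ 2 * (1 + L / mu) ^+ 2)%:E)%E).
Proof.
move=> N2 M0 _ df _ mu0 L0 fslope dxi _ xi0lim [YY _ _] [omb0 ode] tf.
have N0 : (0 < N)%N := ltnW N2.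
split; first by move=> t t0; have [] := is_derive_tilde_f (Y := Y) df dxi ode _ t0.
split; first exact: eucl_sq_derive_tilde_f_le_Cxi N0 M0 df mu0 L0 fslope dxi YY ode _ omb0 xi0lim.
exact: limsup_eucl_sq_derive_tilde_f_le_Clim N0 M0 df mu0 L0 fslope dxi YY ode.
Qed.
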